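(* Let $X$ be a spectral space. Then $\mathcal X'(X)$ with the Zariski topology is a spectral space, and its inverse topology coincides with the lower Vietoris topology on $\mathcal X'(X)$.
   Context: $\mathcal X'(X)$ is the set of nonempty closed subsets of $X$. Its Zariski topology has as basis of open sets $\mathcal U'(\Omega):=\{Y\in\mathcal X'(X)\mid Y\cap\Omega=\emptyset\}$, $\Omega$ ranging over quasi-compact open subsets of $X$. For a spectral space $Y$, the inverse topology on $Y$ is the topology having the quasi-compact open subsets of $Y$ as a basis of closed sets. The lower Vietoris topology on $\mathcal X'(X)$ is the topology with subbasis of open sets $U^-:=\{C\in\mathcal X'(X)\mid C\cap U\neq\emptyset\}$, $U$ ranging over open subsets of $X$. *)

From Stdlib Require Import List.

Definition topology (X : Type) := (X -> Prop) -> Prop.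

Definition is_topology {X : Type} (O : topology X) : Prop :=
  O (fun _ => False) /\ O (fun _ => True) /\
  (forall U V, O U -> O V -> O (fun x => U x /\ V x)) /\
  (forall F : (X -> Prop) -> Prop, (forall U, F U -> O U) ->
     O (fun x => exists U, F U /\ U x)).

Definition generated {X : Type} (S : (X -> Prop) -> Prop) : topology X :=
  fun U => forall O : topology X, is_topology O -> (forall W, S W -> O W) -> O U.

Definition is_closed {X : Type} (O : topology X) (C : X -> Prop) : Prop :=
  O (fun x => ~ C x).

Definition quasi_compact {X : Type} (O : topology X) (K : X -> Prop) : Prop :=
  forall F : (X -> Prop) -> Prop, (forall U, F U -> O U) ->
  (forall x, K x -> exists U, F U /\ U x) ->
  exists l : list (X -> Prop), (forall U, In U l -> F U) /\
     (forall x, K x -> exists U, In U l /\ U x).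

Definition qc_open {X : Type} (O : topology X) (U : X -> Prop) : Prop :=
  O U /\ quasi_compact O U.

Definition T0 {X : Type} (O : topology X) : Prop :=
  forall x y, (forall U, O U -> (U x <-> U y)) -> x = y.

Definition closure_pt {X : Type} (O : topology X) (x : X) : X -> Prop :=
  fun y => forall D, is_closed O D -> D x -> D y.

Definition irreducible_closed {X : Type} (O : topology X) (C : X -> Prop) : Prop :=
  is_closed O C /\ (exists x, C x) /\
  (forall C1 C2, is_closed O C1 -> is_closed O C2 ->
     (forall x, C x -> C1 x \/ C2 x) ->
     (forall x, C x -> C1 x) \/ (forall x, C x -> C2 x)).

Definition sober {X : Type} (O : topology X) : Prop :=
  forall C, irreducible_closed O C ->
    exists x, (forall y, closure_pt O x y <-> C y) /\
      (forall x', (forall y, closure_pt O x' y <-> C y) -> x' = x).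

Definition spectral {X : Type} (O : topology X) : Prop :=
  is_topology O /\ T0 O /\ quasi_compact O (fun _ => True) /\
  (forall U V, qc_open O U -> qc_open O V -> qc_open O (fun x => U x /\ V x)) /\
  (forall U, O U -> forall x, U x -> exists V, qc_open O V /\ V x /\ (forall y, V y -> U y)) /\
  sober O.

Definition inverse_topology {Y : Type} (O : topology Y) : topology Y :=
  generated (fun W => exists V, qc_open O V /\ (forall y, W y <-> ~ V y)).

Record nclosed {X : Type} (O : topology X) := NClosed {
  ncset : X -> Prop;
  nc_closed : is_closed O ncset;
  nc_nonempty : exists x, ncset x }.

Definition zariski {X : Type} (O : topology X) : topology (nclosed O) :=
  generated (fun W => exists Om, qc_open O Om /\
     (forall Y : nclosed O, W Y <-> (forall x, ncset O Y x -> ~ Om x))).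

Definition lower_vietoris {X : Type} (O : topology X) : topology (nclosed O) :=
  generated (fun W => exists U, O U /\
     (forall C : nclosed O, W C <-> exists x, ncset O C x /\ U x)).

From Stdlib Require Import List Classical FunctionalExtensionality PropExtensionality ProofIrrelevance.

(* The sets U'(Om) ([avoiding Om]) are quasi-compact, since each of their members lies in the
   largest one, X \ Om, and U'(Om1) /\ U'(Om2) = U'(Om1 \/ Om2); so they form a basis of
   quasi-compact opens stable under finite intersections, and Zariski opens are closed downwards
   under inclusion.  For an irreducible closed C of X'(X), irreducibility makes the quasi-compact
   opens avoided by some member of C a family closed under finite unions.  The complement Y0 of
   its union is nonempty by compactness of X, belongs to C by compactness of each Om, and is
   contained in every member of C because X has a basis of quasi-compact opens: Y0 is the generic
   point of C.  Finally, the complement of a finite union of U'(Om_i) is the finite intersection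
   of the lower Vietoris sets Om_i^-, and each U^- is the union of the Om^- with Om inside U. *)

Lemma pred_ext {A : Type} (P Q : A -> Prop) : (forall x, P x <-> Q x) -> P = Q.
Proof.
  intros H; apply functional_extensionality; intros x; apply propositional_extensionality, H.
Qed.

Lemma exists_map_preimage {A B : Type} (P : A -> Prop) (g : A -> B) (l : list B) :
  (forall b, In b l -> exists a, P a /\ g a = b) ->
  exists l', (forall a, In a l' -> P a) /\ l = map g l'.
Proof.
  induction l as [|b l IH]; intros H.
  - exists nil; split; [intros a []|reflexivity].
  - destruct (H b (or_introl eq_refl)) as [a [Pa <-]].
    destruct IH as [l' [Pl' ->]]; [intros b' i; apply H; right; exact i|].
    exists (a :: l'); split; [intros a' [<-|i]; auto|reflexivity].
Qed.

Section Topology.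

Context {X : Type} (O : topology X).

Lemma generated_is_topology (S : (X -> Prop) -> Prop) : is_topology (generated S).
Proof.
  repeat split.
  - intros T [h _] _; exact h.
  - intros T [_ [h _]] _; exact h.
  - intros U V HU HV T HT HS; apply HT; [exact (HU T HT HS)|exact (HV T HT HS)].
  - intros F HF T HT HS; apply HT; intros U HU; exact (HF U HU T HT HS).
Qed.

Lemma generated_subbasis (S : (X -> Prop) -> Prop) W : S W -> generated S W.
Proof. intros H T _ HS; exact (HS W H). Qed.

Lemma generated_le (S1 S2 : (X -> Prop) -> Prop) W :
  (forall W', S1 W' -> generated S2 W') -> generated S1 W -> generated S2 W.
Proof. intros H HW T HT HS; apply HW; [exact HT|]; intros W' h; exact (H W' h T HT HS). Qed.

Lemma open_ext U V : O U -> (forall x, U x <-> V x) -> O V.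
Proof. intros HU E; rewrite <- (pred_ext U V E); exact HU. Qed.

Lemma closed_compl_open U : O U -> is_closed O (fun y => ~ U y).
Proof. intros HU; apply (open_ext U); [exact HU|]; intros x; split; [auto|apply NNPP]. Qed.

Hypothesis HO : is_topology O.

Lemma open_empty : O (fun _ => False).
Proof. apply HO. Qed.

Lemma open_full : O (fun _ => True).
Proof. apply HO. Qed.

Lemma closed_full : is_closed O (fun _ => True).
Proof. apply (open_ext (fun _ => False)); [exact open_empty|tauto]. Qed.

Lemma open_inter U V : O U -> O V -> O (fun x => U x /\ V x).
Proof. apply HO. Qed.

Lemma open_union (F : (X -> Prop) -> Prop) :
  (forall U, F U -> O U) -> O (fun x => exists U, F U /\ U x).
Proof. apply HO. Qed.

Lemma open_union2 U V : O U -> O V -> O (fun x => U x \/ V x).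
Proof.
  intros HU HV; apply (open_ext (fun x => exists W, (W = U \/ W = V) /\ W x)).
  - apply open_union; intros W [-> | ->]; assumption.
  - intros x; split; [intros [W [[-> | ->] h]]; auto|].
    intros [h|h]; [exists U|exists V]; auto.
Qed.

Lemma quasi_compact_ext K K' : (forall y, K y <-> K' y) -> quasi_compact O K -> quasi_compact O K'.
Proof. intros E; rewrite (pred_ext K K' E); auto. Qed.

Lemma quasi_compact_list_union (L : list (X -> Prop)) :
  (forall A, In A L -> quasi_compact O A) ->
  quasi_compact O (fun y => exists A, In A L /\ A y).
Proof.
  intros HL F HF; induction L as [|A L IH]; intros Hcov.
  - exists nil; split; [intros U []|intros y [B [[] _]]].
  - destruct (HL A (or_introl eq_refl) F HF) as [l1 [h1 h2]];
      [intros y hy; apply Hcov; exists A; split; [left|]; auto|].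
    destruct IH as [l2 [h3 h4]];
      [intros B i; apply HL; right; exact i|intros y [B [i hB]]; apply Hcov; exists B; split; [right|]; auto|].
    exists (l1 ++ l2); split.
    + intros U hU; apply in_app_iff in hU as [hU|hU]; auto.
    + intros y [B [[<-|i] hB]];
        [destruct (h2 y hB) as [U [iU hU]]|destruct (h4 y (ex_intro _ B (conj i hB))) as [U [iU hU]]];
        exists U; rewrite in_app_iff; auto.
Qed.

Lemma qc_open_empty : qc_open O (fun _ => False).
Proof. split; [exact open_empty|]; intros F _ _; exists nil; split; [intros U []|intros x []]. Qed.

Lemma qc_open_union2 U V : qc_open O U -> qc_open O V -> qc_open O (fun x => U x \/ V x).
Proof.
  intros [oU cU] [oV cV]; split; [apply open_union2; assumption|].
  apply (quasi_compact_ext (fun x => exists A, In A (U :: V :: nil) /\ A x)).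
  - intros x; split; [intros [A [[<-|[<-|[]]] h]]; auto|].
    intros [h|h]; [exists U|exists V]; simpl; auto.
  - apply quasi_compact_list_union; intros A [<-|[<-|[]]]; assumption.
Qed.

Lemma quasi_compact_directed (F : (X -> Prop) -> Prop) K :
  (forall U, F U -> O U) -> F (fun _ => False) ->
  (forall U V, F U -> F V -> F (fun x => U x \/ V x)) ->
  quasi_compact O K -> (forall x, K x -> exists U, F U /\ U x) ->
  exists U, F U /\ forall x, K x -> U x.
Proof.
  intros HF F0 FU HK Hcov.
  destruct (HK F HF Hcov) as [l [hl cov]].
  enough (Hl : exists V, F V /\ forall x, (exists U, In U l /\ U x) -> V x).
  { destruct Hl as [V [FV hV]]; exists V; split; auto. }
  clear cov; induction l as [|U l IH].
  - exists (fun _ => False); split; [exact F0|intros x [U [[] _]]].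
  - destruct IH as [V [FV hV]]; [intros W i; apply hl; right; exact i|].
    exists (fun x => U x \/ V x); split; [apply FU; [apply hl; left|]; auto|].
    intros x [W [[<-|i] hW]]; [left; exact hW|right; apply hV; exists W; auto].
Qed.

Lemma closure_pt_antisym x y : T0 O -> closure_pt O x y -> closure_pt O y x -> x = y.
Proof.
  intros HT hxy hyx; apply HT; intros U hU; split; intros h; apply NNPP; intros hn.
  - exact (hyx _ (closed_compl_open U hU) hn h).
  - exact (hxy _ (closed_compl_open U hU) hn h).
Qed.

Lemma generic_point_unique (C : X -> Prop) x x' : T0 O ->
  (forall y, closure_pt O x y <-> C y) -> (forall y, closure_pt O x' y <-> C y) -> x' = x.
Proof.
  intros HT Hx Hx'; apply closure_pt_antisym; [exact HT| |].
  - apply (proj2 (Hx' x)), (proj1 (Hx x)); intros D _ h; exact h.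
  - apply (proj2 (Hx x')), (proj1 (Hx' x')); intros D _ h; exact h.
Qed.

Lemma irreducible_closed_meet C U V : irreducible_closed O C -> O U -> O V ->
  (exists y, C y /\ U y) -> (exists y, C y /\ V y) -> exists y, C y /\ U y /\ V y.
Proof.
  intros [_ [_ Hirr]] hU hV [y1 [c1 u1]] [y2 [c2 v2]]; apply NNPP; intros hn.
  destruct (Hirr (fun y => ~ U y) (fun y => ~ V y)) as [h|h];
    [apply closed_compl_open; exact hU|apply closed_compl_open; exact hV| | |].
  - intros y hy; apply NNPP; intros h; apply hn; exists y; split; [exact hy|];
      split; apply NNPP; intros h'; apply h; auto.
  - exact (h y1 c1 u1).
  - exact (h y2 c2 v2).
Qed.

End Topology.

Section Zariski.

Context {X : Type} (O : topology X).
Hypothesis HO : is_topology O.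

Definition avoiding (Om : X -> Prop) (Y : nclosed O) : Prop := forall x, ncset O Y x -> ~ Om x.

Lemma avoiding_union Om1 Om2 Y :
  avoiding (fun x => Om1 x \/ Om2 x) Y <-> avoiding Om1 Y /\ avoiding Om2 Y.
Proof.
  split; [intros h; split; intros x hx o; apply (h x hx); auto|].
  intros [h1 h2] x hx [o|o]; [exact (h1 x hx o)|exact (h2 x hx o)].
Qed.

Lemma not_avoiding Om Y : ~ avoiding Om Y <-> exists x, ncset O Y x /\ Om x.
Proof.
  split; [|intros [x [hx o]] h; exact (h x hx o)].
  intros h; apply NNPP; intros hn; apply h; intros x hx o; apply hn; exists x; auto.
Qed.

Lemma nclosed_ext (Y1 Y2 : nclosed O) : (forall x, ncset O Y1 x <-> ncset O Y2 x) -> Y1 = Y2.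
Proof.
  destruct Y1 as [s1 c1 n1], Y2 as [s2 c2 n2]; simpl; intros E.
  destruct (pred_ext s1 s2 E); f_equal; apply proof_irrelevance.
Qed.

Lemma zariski_open_avoiding Om : qc_open O Om -> zariski O (avoiding Om).
Proof. intros q; apply generated_subbasis; exists Om; split; [exact q|reflexivity]. Qed.

Lemma zariski_open_basis W : zariski O W -> forall Y, W Y ->
  exists Om, qc_open O Om /\ avoiding Om Y /\ forall Y', avoiding Om Y' -> W Y'.
Proof.
  intros HW; apply HW; [repeat split|].
  - intros Y [].
  - intros Y _; exists (fun _ => False); split; [exact (qc_open_empty O HO)|].
    split; [intros x _ []|auto].
  - intros U V HU HV Y [hU hV].
    destruct (HU Y hU) as [O1 [q1 [a1 s1]]], (HV Y hV) as [O2 [q2 [a2 s2]]].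
    exists (fun x => O1 x \/ O2 x); split; [exact (qc_open_union2 O HO _ _ q1 q2)|].
    split; [apply avoiding_union; auto|].
    intros Y' a; apply avoiding_union in a as [a1' a2']; auto.
  - intros F HF Y [U [FU UY]]; destruct (HF U FU Y UY) as [Om [q [a s]]].
    exists Om; split; [exact q|split; [exact a|]]; intros Y' h; exists U; auto.
  - intros W' [Om [q E]] Y hY; exists Om; split; [exact q|].
    split; [exact (proj1 (E Y) hY)|intros Y' h; exact (proj2 (E Y') h)].
Qed.

Lemma zariski_open_antitone W (Y1 Y2 : nclosed O) : zariski O W -> W Y2 ->
  (forall x, ncset O Y1 x -> ncset O Y2 x) -> W Y1.
Proof.
  intros HW h2 sub; destruct (zariski_open_basis W HW Y2 h2) as [Om [_ [a s]]].
  apply s; intros x hx; apply a, sub, hx.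
Qed.

Lemma qc_open_avoiding Om : qc_open O Om -> qc_open (zariski O) (avoiding Om).
Proof.
  intros q; split; [exact (zariski_open_avoiding Om q)|].
  intros F HF Hcov; destruct (classic (exists x, ~ Om x)) as [[x0 hx0]|hfull].
  - pose (Ytop := NClosed X O (fun x => ~ Om x) (closed_compl_open O Om (proj1 q))
                    (ex_intro _ x0 hx0)).
    destruct (Hcov Ytop (fun x h => h)) as [U [FU UY]].
    exists (U :: nil); split; [intros U' [<-|[]]; exact FU|].
    intros Y a; exists U; split; [left; reflexivity|].
    exact (zariski_open_antitone U Y Ytop (HF U FU) UY a).
  - exists nil; split; [intros U []|]; intros Y a.
    destruct (nc_nonempty O Y) as [x hx]; exfalso.
    apply (a x hx), NNPP; intros h; apply hfull; exists x; exact h.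
Qed.

Lemma zariski_qc_open_finite U : qc_open (zariski O) U ->
  exists l, (forall Om, In Om l -> qc_open O Om) /\
    forall Y, U Y <-> exists Om, In Om l /\ avoiding Om Y.
Proof.
  intros [oU cU].
  pose (P := fun Om => qc_open O Om /\ forall Y, avoiding Om Y -> U Y).
  destruct (cU (fun B => exists Om, P Om /\ avoiding Om = B)) as [lB [hB cov]].
  - intros B [Om [[q _] <-]]; exact (zariski_open_avoiding Om q).
  - intros Y hY; destruct (zariski_open_basis U oU Y hY) as [Om [q [a s]]].
    exists (avoiding Om); split; [exists Om; split; [split; [exact q|exact s]|reflexivity]|exact a].
  - destruct (exists_map_preimage P avoiding lB hB) as [l [Pl ->]].
    exists l; split; [intros Om i; apply Pl, i|intros Y; split].
    + intros hY; destruct (cov Y hY) as [B [iB hB']].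
      apply in_map_iff in iB as [Om [<- i]]; exists Om; auto.
    + intros [Om [i a]]; exact (proj2 (Pl Om i) Y a).
Qed.

Lemma qc_open_zariski_inter U V : qc_open (zariski O) U -> qc_open (zariski O) V ->
  qc_open (zariski O) (fun Y => U Y /\ V Y).
Proof.
  intros hU hV.
  split; [apply (open_inter _ (generated_is_topology _)); [apply hU|apply hV]|].
  destruct (zariski_qc_open_finite U hU) as [l1 [q1 E1]].
  destruct (zariski_qc_open_finite V hV) as [l2 [q2 E2]].
  pose (L := map (fun p => avoiding (fun x => fst p x \/ snd p x)) (list_prod l1 l2)).
  apply (quasi_compact_ext _ (fun Y => exists A, In A L /\ A Y)).
  - intros Y; unfold L; split.
    + intros [A [iA hA]]; apply in_map_iff in iA as [[O1 O2] [<- i]].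
      apply in_prod_iff in i as [i1 i2]; apply avoiding_union in hA as [a1 a2].
      split; [apply E1|apply E2]; eauto.
    + intros [hu hv]; apply E1 in hu as [O1 [i1 a1]]; apply E2 in hv as [O2 [i2 a2]].
      exists (avoiding (fun x => O1 x \/ O2 x)); split; [|apply avoiding_union; auto].
      apply in_map_iff; exists (O1, O2); split; [reflexivity|apply in_prod; auto].
  - apply quasi_compact_list_union; intros A iA; unfold L in iA.
    apply in_map_iff in iA as [[O1 O2] [<- i]]; apply in_prod_iff in i as [i1 i2].
    apply qc_open_avoiding, qc_open_union2; auto.
Qed.

Lemma zariski_quasi_compact : quasi_compact (zariski O) (fun _ => True).
Proof.
  intros F HF Hcov; destruct (classic (exists x : X, True)) as [[x0 _]|hempty].
  - pose (Ytop := NClosed X O (fun _ => True) (closed_full O HO)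
                    (ex_intro _ x0 I)).
    destruct (Hcov Ytop I) as [U [FU UY]].
    exists (U :: nil); split; [intros U' [<-|[]]; exact FU|].
    intros Y _; exists U; split; [left; reflexivity|].
    exact (zariski_open_antitone U Y Ytop (HF U FU) UY (fun _ _ => I)).
  - exists nil; split; [intros U []|]; intros Y _.
    destruct (nc_nonempty O Y) as [x _]; exfalso; apply hempty; exists x; exact I.
Qed.

Lemma inverse_zariski_le_lower_vietoris W :
  inverse_topology (zariski O) W -> lower_vietoris O W.
Proof.
  apply generated_le; intros W' [V [qV E]].
  destruct (zariski_qc_open_finite V qV) as [l [ql El]].
  apply (open_ext _ (fun Y => forall Om, In Om l -> ~ avoiding Om Y)).
  - clear E El; induction l as [|Om l IH].
    + apply (open_ext _ (fun _ => True)); [apply open_full, generated_is_topology|].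
      intros Y; split; [intros _ Om []|auto].
    + apply (open_ext _ (fun Y => ~ avoiding Om Y /\ forall Om', In Om' l -> ~ avoiding Om' Y)).
      * apply open_inter; [apply generated_is_topology| |apply IH; intros Om' i; apply ql; right; exact i].
        apply generated_subbasis; exists Om; split; [apply (ql Om); left; reflexivity|].
        intros Y; apply not_avoiding.
      * intros Y; split; [intros [h1 h2] Om' [<-|i]; auto|].
        intros h; split; [apply h; left|intros Om' i; apply h; right]; auto.
  - intros Y; rewrite E, El; split.
    + intros h [Om [i a]]; exact (h Om i a).
    + intros h Om i a; apply h; exists Om; auto.
Qed.

End Zariski.

Section QcBasis.

Context {X : Type} (O : topology X).
Hypothesis HO : is_topology O.
Hypothesis Hbasis : forall U, O U -> forall x, U x ->
  exists V, qc_open O V /\ V x /\ forall y, V y -> U y.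

Lemma avoiding_separates (Y : nclosed O) x : ~ ncset O Y x ->
  exists Om, qc_open O Om /\ Om x /\ avoiding O Om Y.
Proof.
  intros hx; destruct (Hbasis _ (nc_closed O Y) x hx) as [Om [q [o s]]].
  exists Om; split; [exact q|split; [exact o|]]; intros y hy oy; exact (s y oy hy).
Qed.

Lemma zariski_T0 : T0 (zariski O).
Proof.
  intros Y1 Y2 H; apply nclosed_ext; intros x.
  enough (Hle : forall Z1 Z2 : nclosed O,
            (forall U, zariski O U -> (U Z1 <-> U Z2)) -> ncset O Z1 x -> ncset O Z2 x).
  { split; apply Hle; [exact H|intros U hU; symmetry; exact (H U hU)]. }
  intros Z1 Z2 HZ hx; apply NNPP; intros hn.
  destruct (avoiding_separates Z2 x hn) as [Om [q [o a]]].
  apply (HZ _ (zariski_open_avoiding O Om q)) in a; exact (a x hx o).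
Qed.

Lemma lower_vietoris_le_inverse_zariski W :
  lower_vietoris O W -> inverse_topology (zariski O) W.
Proof.
  apply generated_le; intros W' [U [oU E]].
  apply (open_ext _ (fun Y => exists B, (exists Om, qc_open O Om /\ (forall x, Om x -> U x) /\
                                  B = fun Y => ~ avoiding O Om Y) /\ B Y)).
  - apply open_union; [apply generated_is_topology|]; intros B [Om [q [_ ->]]].
    apply generated_subbasis; exists (avoiding O Om); split; [exact (qc_open_avoiding O HO Om q)|].
    intros Y; reflexivity.
  - intros Y; rewrite E; split.
    + intros [B [[Om [_ [s ->]]] a]]; apply not_avoiding in a as [x [hx o]]; exists x; auto.
    + intros [x [hx ux]]; destruct (Hbasis U oU x ux) as [Om [q [o s]]].
      exists (fun Y => ~ avoiding O Om Y); split; [exists Om; auto|].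
      apply not_avoiding; exists x; auto.
Qed.

Hypothesis Hcompact : quasi_compact O (fun _ => True).

Section GenericPoint.

Variable C : nclosed O -> Prop.
Hypothesis HC : irreducible_closed (zariski O) C.

Definition avoided_in_C (Om : X -> Prop) : Prop :=
  qc_open O Om /\ exists Y, C Y /\ avoiding O Om Y.

Lemma avoided_in_C_union Om1 Om2 :
  avoided_in_C Om1 -> avoided_in_C Om2 -> avoided_in_C (fun x => Om1 x \/ Om2 x).
Proof.
  intros [q1 h1] [q2 h2]; split; [exact (qc_open_union2 O HO _ _ q1 q2)|].
  destruct (irreducible_closed_meet _ _ _ _ HC (zariski_open_avoiding O Om1 q1)
              (zariski_open_avoiding O Om2 q2) h1 h2) as [Y [cY [a1 a2]]].
  exists Y; split; [exact cY|apply avoiding_union; auto].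
Qed.

Lemma avoided_in_C_empty : avoided_in_C (fun _ => False).
Proof.
  split; [exact (qc_open_empty O HO)|].
  destruct HC as [_ [[Y cY] _]]; exists Y; split; [exact cY|intros x _ []].
Qed.

Lemma avoided_in_C_cover K : quasi_compact O K ->
  (forall x, K x -> exists Om, avoided_in_C Om /\ Om x) ->
  exists Y, C Y /\ forall x, ncset O Y x -> ~ K x.
Proof.
  intros qK cov.
  destruct (quasi_compact_directed O avoided_in_C K (fun Om h => proj1 (proj1 h))
              avoided_in_C_empty avoided_in_C_union qK cov) as [Om [[_ [Y [cY a]]] s]].
  exists Y; split; [exact cY|intros x hx k; exact (a x hx (s x k))].
Qed.

Definition generic_set (x : X) : Prop := forall Om, avoided_in_C Om -> ~ Om x.

Lemma not_generic_set x : ~ generic_set x -> exists Om, avoided_in_C Om /\ Om x.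
Proof.
  intros h; apply NNPP; intros hn; apply h; intros Om a o; apply hn; exists Om; auto.
Qed.

Lemma generic_set_closed : is_closed O generic_set.
Proof.
  apply (open_ext O (fun x => exists Om, avoided_in_C Om /\ Om x)).
  - apply open_union; [exact HO|]; intros Om [[o _] _]; exact o.
  - intros x; split; [intros [Om [a o]] h; exact (h Om a o)|apply not_generic_set].
Qed.

Lemma generic_set_nonempty : exists x, generic_set x.
Proof.
  apply NNPP; intros hn.
  destruct (avoided_in_C_cover _ Hcompact) as [Y [_ hY]].
  - intros x _; apply not_generic_set; intros h; apply hn; exists x; exact h.
  - destruct (nc_nonempty O Y) as [x hx]; exact (hY x hx I).
Qed.

Definition generic_member : nclosed O :=
  NClosed X O generic_set generic_set_closed generic_set_nonempty.

Lemma generic_member_in_C : C generic_member.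
Proof.
  apply NNPP; intros hn; destruct HC as [hCcl _].
  destruct (zariski_open_basis O HO _ hCcl _ hn) as [Om [[oOm cOm] [a s]]].
  destruct (avoided_in_C_cover Om cOm) as [Y [cY hY]].
  - intros x o; apply not_generic_set; intros g; exact (a x g o).
  - exact (s Y hY cY).
Qed.

Lemma generic_member_below Y : C Y -> forall x, generic_set x -> ncset O Y x.
Proof.
  intros cY x g; apply NNPP; intros hn.
  destruct (avoiding_separates Y x hn) as [Om [q [o a]]].
  exact (g Om (conj q (ex_intro _ Y (conj cY a))) o).
Qed.

Lemma closure_generic_member Y : closure_pt (zariski O) generic_member Y <-> C Y.
Proof.
  split; [intros h; exact (h C (proj1 HC) generic_member_in_C)|].
  intros cY D hD hDg; apply NNPP; intros hnD.
  exact (zariski_open_antitone O HO _ generic_member Y hD hnD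
           (generic_member_below Y cY) hDg).
Qed.

End GenericPoint.

Lemma zariski_sober : sober (zariski O).
Proof.
  intros C HC; exists (generic_member C HC); split; [exact (closure_generic_member C HC)|].
  intros Y' HY'; exact (generic_point_unique _ C _ _ zariski_T0
                          (closure_generic_member C HC) HY').
Qed.

Lemma zariski_spectral : spectral (zariski O).
Proof.
  split; [apply generated_is_topology|].
  split; [exact zariski_T0|].
  split; [exact (zariski_quasi_compact O HO)|].
  split; [intros U V; exact (qc_open_zariski_inter O HO U V)|].
  split; [|exact zariski_sober].
  intros U hU Y hY; destruct (zariski_open_basis O HO U hU Y hY) as [Om [q [a s]]].
  exists (avoiding O Om); split; [exact (qc_open_avoiding O HO Om q)|auto].
Qed.

End QcBasis.

Theorem proposition4p3 (X : Type) (O : topology X) :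
  spectral O ->
  spectral (zariski O) /\
  (forall W, inverse_topology (zariski O) W <-> lower_vietoris O W).
Proof.
  intros [HO [_ [Hcompact [_ [Hbasis _]]]]].
  split; [exact (zariski_spectral O HO Hbasis Hcompact)|].
  intros W; split.
  - exact (inverse_zariski_le_lower_vietoris O HO W).
  - exact (lower_vietoris_le_inverse_zariski O HO Hbasis W).
Qed.
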